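(* Let $3\le w<n$ and suppose a Steiner system $S(3,w,n)$ exists. Then $$q'_0(3,w,n)=\min_{S}\ \max_{D\in S'}\ \chi(D)+1,$$ where the minimum is over all Steiner systems $S$ of type $S(3,w,n)$ and, for each such $S$, $S'$ denotes the set of all $S(2,w-1,n-1)$ systems derived from $S$ (one for each point of $S$).
   Context: $\mathbb{Z}_q=\{0,\dots,q-1\}$ (an alphabet); $\mathrm{wt}$ = number of nonzero coordinates; $d$ = Hamming distance; $J_q(n,w)$ = weight-$w$ words of $\mathbb{Z}_q^n$. An $(n,w,d)_q$ code of size $M$ is a subset $C\subseteq J_q(n,w)$ with $|C|=M$ and pairwise distances at least $d$. A Steiner system $S(t,k,n)$ is a pair $(N,B)$, $|N|=n$, $B$ a set of $k$-subsets (blocks) of $N$ with every $t$-subset of $N$ in exactly one block. For $\alpha\subset N$ with $0<|\alpha|<t$, the derived system is $(N\setminus\alpha,\{\beta\setminus\alpha:\alpha\subseteq\beta\in B\})$, an $S(t-|\alpha|,k-|\alpha|,n-|\alpha|)$. For a Steiner system $S(t,k,n)$, $\chi(S)$ is the minimum number of classes in a partition of its block set such that any two distinct blocks in the same class intersect in at most $t-2$ points (chromatic number of the graph on blocks where two blocks are adjacent iff they share exactly $t-1$ points); for $t=2$ this means blocks in the same class are pairwise disjoint. For $t,k,n$ such that an $S(t,k,n)$ exists, $q'_0(t,k,n)$ is the smallest $q$ for which an $(n,k,2k-t+1)_q$ code of size $\binom{n}{t}/\binom{k}{t}$ exists. *)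

From mathcomp Require Import all_boot.
Set Implicit Arguments. Unset Strict Implicit. Unset Printing Implicit Defensive.

Definition steiner (t k n : nat) (B : {set {set 'I_n}}) : bool :=
  [forall X in B, #|X| == k] &&
  [forall T : {set 'I_n}, (#|T| == t) ==> (#|[set X in B | T \subset X]| == 1)].

(* Blocks of the derived system at the point p (on the point set 'I_n minus p). *)
Definition derived n (B : {set {set 'I_n}}) (p : 'I_n) : {set {set 'I_n}} :=
  [set X :\ p | X in [set X in B | p \in X]].

Definition colorable (T : finType) (t : nat) (B : {set {set T}}) (k : nat) : bool :=
  [exists f : {ffun {set T} -> 'I_k},
    [forall X1 in B, forall X2 in B,
       ((X1 != X2) && (f X1 == f X2)) ==> (#|X1 :&: X2| <= t - 2)]].

Lemma colorable_exists (T : finType) (t : nat) (B : {set {set T}}) :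
  exists k, colorable t B k.
Proof.
exists #|{set T}|; apply/existsP; exists [ffun X => enum_rank X].
apply/forallP => X1; apply/implyP => _; apply/forallP => X2; apply/implyP => _.
apply/implyP => /andP [ne]; rewrite !ffunE => /eqP /enum_rank_inj E.
by rewrite E eqxx in ne.
Qed.

Definition chi (T : finType) (t : nat) (B : {set {set T}}) : nat :=
  ex_minn (colorable_exists t B).

Definition max_derived_chi n (B : {set {set 'I_n}}) : nat :=
  \max_(p : 'I_n) chi 2 (derived B p).

Definition wt n q (x : {ffun 'I_n -> 'I_q}) : nat := #|[set i | (x i : nat) != 0]|.
Definition hdist n q (x y : {ffun 'I_n -> 'I_q}) : nat := #|[set i | x i != y i]|.

Definition code_exists (t k n q : nat) : Prop :=
  exists C : {set {ffun 'I_n -> 'I_q}},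
    [/\ forall x, x \in C -> wt x = k,
        forall x y, x \in C -> y \in C -> x != y -> 2 * k - t + 1 <= hdist x y
      & #|C| = 'C(n, t) %/ 'C(k, t)].

From mathcomp Require Import all_boot zify.
Set Implicit Arguments. Unset Strict Implicit. Unset Printing Implicit Defensive.

(* For words of weight w, distance at least 2w-2 means that the supports of two
   codewords share at most two points, and that if the codewords carry the same
   nonzero symbol at some point then that point is all their supports share.
   Hence the supports of an (n,w,2w-2)_q code of size C(n,3)/C(w,3) form an
   S(3,w,n) by double counting, and "symbol at p minus one" properly colours the
   system derived at p with q-1 colours.  Conversely, given an S(3,w,n) and
   colourings of its derived systems with m colours, the word of a block X that
   carries at p in X the colour of X minus p, shifted up by one, yields such a
   code over an alphabet of size m+1.  Choosing S to minimise the largest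
   chromatic number of a derived system gives the formula. *)

Lemma card_set_sum_bool (T : finType) (A : {pred T}) (P : pred T) :
  #|[set x in A | P x]| = \sum_(x in A) P x.
Proof.
rewrite -sum1_card big_mkcond [RHS]big_mkcond; apply: eq_bigr => x _.
by rewrite !inE; case: (x \in A); case: (P x).
Qed.

Section Counting.
Variable T : finType.
Implicit Types (X : {set T}) (B : {set {set T}}).

Lemma sum_card_blocks_containing (t k : nat) B :
  (forall X, X \in B -> #|X| = k) ->
  \sum_(A : {set T} | #|A| == t) #|[set X in B | A \subset X]| = #|B| * 'C(k, t).
Proof.
move=> Bk; under eq_bigr => A _ do rewrite card_set_sum_bool.
rewrite exchange_big -sum_nat_const /=.
apply: eq_bigr => X XB.
rewrite -(Bk X XB) -cards_draws -sum1_card big_mkcond [RHS]big_mkcond /=.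
by apply: eq_bigr => A _; rewrite inE; case: (A \subset X); case: (#|A| == t).
Qed.

Lemma exists_subset_card X t : t <= #|X| -> exists2 A : {set T}, A \subset X & #|A| = t.
Proof.
rewrite -(bin_gt0 _ t) -cards_draws card_gt0 => /set0Pn [A].
by rewrite inE => /andP [sAX /eqP cA]; exists A.
Qed.
End Counting.

Section SteinerSystems.
Variables (n t k : nat).
Implicit Types (A X Y : {set 'I_n}) (B : {set {set 'I_n}}).

Lemma steiner_block_card B X : steiner t k B -> X \in B -> #|X| = k.
Proof. by case/andP => /forall_inP Bk _ /Bk /eqP. Qed.

Lemma steiner_card B : steiner t k B -> #|B| * 'C(k, t) = 'C(n, t).
Proof.
case/andP=> /forall_inP Bk /forallP Bt.
rewrite -(sum_card_blocks_containing t (fun X XB => eqP (Bk X XB))).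
rewrite (eq_bigr (fun=> 1)) => [|A /eqP At]; last first.
  by apply/eqP; have /implyP := Bt A; apply; rewrite At.
by rewrite sum1_card -cardsE card_draws card_ord.
Qed.

Lemma steiner_card_div B : t <= k -> steiner t k B -> 'C(n, t) %/ 'C(k, t) = #|B|.
Proof. by move=> le_tk StB; rewrite -(steiner_card StB) mulnK // bin_gt0. Qed.

Lemma steiner_meet B X Y :
  steiner t k B -> X \in B -> Y \in B -> X != Y -> #|X :&: Y| < t.
Proof.
case/andP => _ /forallP Bt XB YB; apply: contraNT; rewrite -leqNgt.
case/exists_subset_card => A sAXY /eqP At.
have /card_le1_eqP XYeq : #|[set Z in B | A \subset Z]| <= 1.
  by have /implyP/(_ At)/eqP-> := Bt A.
by apply/eqP/XYeq; rewrite inE ?XB ?YB (subset_trans sAXY) ?subsetIl ?subsetIr.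
Qed.

Lemma steiner_of_packing B :
  (forall X, X \in B -> #|X| = k) ->
  (forall A, #|A| = t -> #|[set X in B | A \subset X]| <= 1) ->
  #|B| * 'C(k, t) = 'C(n, t) -> steiner t k B.
Proof.
move=> Bk Bt1 cardB; apply/andP; split; first by apply/forall_inP => X /Bk ->.
have lt1 A : #|A| == t -> #|[set X in B | A \subset X]| <= 1 ?= iff
                         (#|[set X in B | A \subset X]| == 1).
  by move=> /eqP /Bt1 le1; split.
have := (leqif_sum lt1).2; rewrite (sum_card_blocks_containing _ Bk) cardB.
rewrite sum1_card -cardsE card_draws card_ord eqxx => /esym /forall_inP Bt.
by apply/forallP => A; apply/implyP => /Bt.
Qed.
End SteinerSystems.

Section Colorings.
Variables (T : finType) (t : nat).
Implicit Types (B : {set {set T}}) (k : nat).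

Lemma colorableP B k :
  reflect (exists f : {ffun {set T} -> 'I_k},
             {in B &, forall X Y, X != Y -> f X = f Y -> #|X :&: Y| <= t - 2})
          (colorable t B k).
Proof.
apply: (iffP existsP) => -[f Hf]; exists f.
  move=> X Y XB YB XY fXY; have /forall_inP/(_ X XB)/forall_inP/(_ Y YB) := Hf.
  by rewrite XY fXY eqxx => /implyP; apply.
apply/forall_inP => X XB; apply/forall_inP => Y YB.
by apply/implyP => /andP [XY /eqP /(Hf X Y XB YB XY)].
Qed.

Lemma colorable_widen B k k' : k <= k' -> colorable t B k -> colorable t B k'.
Proof.
move=> lekk' /colorableP [f Hf]; apply/colorableP.
exists [ffun X => widen_ord lekk' (f X)] => X Y XB YB XY.
by rewrite !ffunE => /(congr1 val) /= /val_inj; apply: Hf.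
Qed.

Lemma chi_colorable B : colorable t B (chi t B).
Proof. by rewrite /chi; case: ex_minnP. Qed.

Lemma chi_min B k : colorable t B k -> chi t B <= k.
Proof. by rewrite /chi; case: ex_minnP => m _; apply. Qed.
End Colorings.

Lemma max_derived_chi_leP n (B : {set {set 'I_n}}) k :
  max_derived_chi B <= k <-> forall p, colorable 2 (derived B p) k.
Proof.
rewrite /max_derived_chi; split=> [le_k p | colB].
  exact: colorable_widen (leq_trans (leq_bigmax p) le_k) (chi_colorable _ _).
by apply/bigmax_leqP => p _; apply: chi_min.
Qed.

Section Words.
Variables n q : nat.
Implicit Types x y : {ffun 'I_n -> 'I_q}.

Definition supp x : {set 'I_n} := [set i | (x i : nat) != 0].

Definition agree x y : {set 'I_n} := [set i in supp x :&: supp y | x i == y i].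

Lemma card_supp x : #|supp x| = wt x.
Proof. by []. Qed.

Lemma hdist_wt x y :
  hdist x y + #|agree x y| + #|supp x :&: supp y| = wt x + wt y.
Proof.
have agree_sub : agree x y \subset supp x :|: supp y.
  by apply/subsetP => i; rewrite !inE => /andP [/andP [-> _] _].
rewrite /hdist; have -> : [set i | x i != y i] = (supp x :|: supp y) :\: agree x y.
  apply/setP => i; rewrite !inE -val_eqE /=.
  by case: (x i : nat) => [|a]; case: (y i : nat) => [|b] //=; rewrite andbT.
rewrite cardsD (setIidPr agree_sub) -!card_supp -cardsUI.
by rewrite subnK // subset_leq_card.
Qed.

Lemma hdist_ge_2w x y w : 2 <= w -> wt x = w -> wt y = w ->
  (2 * w - 3 + 1 <= hdist x y) = (#|supp x :&: supp y| + #|agree x y| <= 2).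
Proof.
by move=> w2 xw yw; have := hdist_wt x y; rewrite xw yw => e; apply/idP/idP; lia.
Qed.

Lemma alphabet_gt1 x : 0 < wt x -> 1 < q.
Proof.
rewrite -card_supp card_gt0 => /set0Pn [i]; rewrite inE.
by have := ltn_ord (x i); lia.
Qed.
End Words.

Lemma mem_derived n (B : {set {set 'I_n}}) X p :
  X \in B -> p \in X -> X :\ p \in derived B p.
Proof. by move=> XB pX; apply/imsetP; exists X; rewrite ?inE ?XB. Qed.

Section CodeOfSteiner.
Variables (n w m : nat) (S : {set {set 'I_n}}).
Variable col : 'I_n -> {ffun {set 'I_n} -> 'I_m}.
Hypothesis StS : steiner 3 w S.
Hypothesis col_proper : forall p, {in derived S p &, forall X Y,
  X != Y -> col p X = col p Y -> #|X :&: Y| <= 0}.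

Definition block_word (X : {set 'I_n}) : {ffun 'I_n -> 'I_m.+1} :=
  [ffun i => if i \in X then lift ord0 (col i (X :\ i)) else ord0].

Lemma supp_block_word X : supp (block_word X) = X.
Proof. by apply/setP => i; rewrite !inE ffunE; case: (i \in X). Qed.

Lemma block_word_meet X Y : X \in S -> Y \in S -> X != Y ->
  #|supp (block_word X) :&: supp (block_word Y)| +
  #|agree (block_word X) (block_word Y)| <= 2.
Proof.
move=> XS YS XY; rewrite !supp_block_word.
have XY2 : #|X :&: Y| <= 2 := steiner_meet StS XS YS XY.
have [/eqP -> | /set0Pn [i]] := boolP (agree (block_word X) (block_word Y) == set0).
  by rewrite cards0 addn0.
rewrite inE !supp_block_word in_setI => /andP [/andP [iX iY]].
rewrite !ffunE iX iY => /eqP /lift_inj col_eq.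
have XiYi : X :\ i != Y :\ i.
  by apply: contraNneq XY => eXYi; rewrite -(setD1K iX) -(setD1K iY) eXYi.
have := col_proper (mem_derived XS iX) (mem_derived YS iY) XiYi col_eq.
rewrite -setDIl => XYi0.
have XY1 : #|X :&: Y| <= 1 by rewrite (cardsD1 i) !inE iX iY; lia.
have : #|agree (block_word X) (block_word Y)| <= #|X :&: Y|.
  rewrite -{2}(supp_block_word X) -{2}(supp_block_word Y).
  by apply/subset_leq_card/subsetP => j; rewrite inE => /andP [].
lia.
Qed.

Lemma code_of_steiner : 3 <= w -> code_exists 3 w n m.+1.
Proof.
move=> w3.
have wt_word X : X \in S -> wt (block_word X) = w.
  by move=> XS; rewrite -card_supp supp_block_word (steiner_block_card StS XS).
exists [set block_word X | X in S]; split.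
- by move=> _ /imsetP [X XS ->]; apply: wt_word.
- move=> _ _ /imsetP [X XS ->] /imsetP [Y YS ->] XY.
  have neXY : X != Y by apply: contraNneq XY => ->.
  by rewrite hdist_ge_2w ?wt_word ?block_word_meet // ltnW.
- rewrite card_in_imset => [|X Y _ _ eXY]; last first.
    by rewrite -(supp_block_word X) eXY supp_block_word.
  by rewrite (steiner_card_div w3 StS).
Qed.
End CodeOfSteiner.

Lemma code_of_colorable_derived n w m (S : {set {set 'I_n}}) :
  3 <= w -> steiner 3 w S -> (forall p, colorable 2 (derived S p) m) ->
  code_exists 3 w n m.+1.
Proof.
move=> w3 StS /(_ _)/colorableP colS.
have [col col_proper] := fin_all_exists colS.
exact: code_of_steiner StS col_proper w3.
Qed.

Section SteinerOfCode.
Variables (n w m : nat) (C : {set {ffun 'I_n -> 'I_m.+2}}).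
Hypothesis w_ge3 : 3 <= w.
Hypothesis C_wt : forall x, x \in C -> wt x = w.
Hypothesis C_dist :
  forall x y, x \in C -> y \in C -> x != y -> 2 * w - 3 + 1 <= hdist x y.

Lemma code_meet x y : x \in C -> y \in C -> x != y ->
  #|supp x :&: supp y| + #|agree x y| <= 2.
Proof. by move=> xC yC xy; rewrite -(hdist_ge_2w (ltnW w_ge3)) ?C_wt ?C_dist. Qed.

Lemma supp_code_inj : {in C &, injective (@supp n m.+2)}.
Proof.
move=> x y xC yC sxy; apply/eqP; apply: contraT => xy.
by have := code_meet xC yC xy; rewrite -sxy setIid card_supp C_wt //; lia.
Qed.

Definition code_blocks : {set {set 'I_n}} := [set supp x | x in C].

Lemma code_blocks_packing (A : {set 'I_n}) : #|A| = 3 ->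
  #|[set X in code_blocks | A \subset X]| <= 1.
Proof.
move=> A3; apply/card_le1_eqP => X Y.
rewrite !inE => /andP [/imsetP [x xC ->] Ax] /andP [/imsetP [y yC ->] Ay].
apply/eqP; apply: contraT => sxy.
have xy : x != y by apply: contraNneq sxy => ->.
have : A \subset supp x :&: supp y by rewrite subsetI Ax Ay.
by move/subset_leq_card; have := code_meet xC yC xy; lia.
Qed.

Lemma steiner_code_blocks : #|C| * 'C(w, 3) = 'C(n, 3) -> steiner 3 w code_blocks.
Proof.
move=> cardC; apply: steiner_of_packing code_blocks_packing _.
  by move=> _ /imsetP [x xC ->]; rewrite card_supp C_wt.
by rewrite card_in_imset //; apply: supp_code_inj.
Qed.

Definition code_color p : {ffun {set 'I_n} -> 'I_m.+1} :=
  [ffun Z => if [pick x in C | supp x == p |: Z] is Some x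
             then odflt ord0 (unlift ord0 (x p)) else ord0].

Lemma code_colorE p Z : Z \in derived code_blocks p -> exists2 x, x \in C &
  [/\ supp x = p |: Z, p \notin Z & code_color p Z = odflt ord0 (unlift ord0 (x p))].
Proof.
case/imsetP => _ /[!inE] /andP [/imsetP [x xC ->] px] ->.
rewrite ffunE; case: pickP => [y /andP [yC /eqP sy] | none].
  by exists y; rewrite ?setD11.
by have := none x; rewrite xC setD1K ?eqxx.
Qed.

Lemma unlift0_inj (a b : 'I_m.+2) : a != ord0 -> b != ord0 ->
  odflt ord0 (unlift ord0 a) = odflt ord0 (unlift ord0 b) -> a = b.
Proof. by case: unliftP => [a' ->|->] //; case: unliftP => [b' ->|->] // _ _ /= ->. Qed.

Lemma code_color_proper p : {in derived code_blocks p &, forall Z1 Z2,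
  Z1 != Z2 -> code_color p Z1 = code_color p Z2 -> #|Z1 :&: Z2| <= 0}.
Proof.
move=> Z1 Z2 /code_colorE [x1 x1C [s1 pZ1 ->]] /code_colorE [x2 x2C [s2 pZ2 ->]].
move=> Z12 col12.
have x12 : x1 != x2.
  by apply: contraNneq Z12 => e; rewrite -(setU1K pZ1) -(setU1K pZ2) -s1 -s2 e.
have supp_p (x : {ffun 'I_n -> 'I_m.+2}) Z : supp x = p |: Z -> x p != ord0.
  by move=> sx; have := setU11 p Z; rewrite -sx inE -val_eqE.
have p_agree : p \in agree x1 x2.
  rewrite inE s1 s2 -setUIr setU11 /=.
  by rewrite (unlift0_inj (supp_p _ _ s1) (supp_p _ _ s2) col12).
have pZ12 : p \notin Z1 :&: Z2 by rewrite inE (negbTE pZ1).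
have : 0 < #|agree x1 x2| by apply/card_gt0P; exists p.
have := code_meet x1C x2C x12; rewrite s1 s2 -setUIr cardsU1 pZ12; lia.
Qed.
End SteinerOfCode.

Lemma steiner_of_code n w m (B : {set {set 'I_n}}) :
  3 <= w -> steiner 3 w B -> code_exists 3 w n m.+2 ->
  exists2 S : {set {set 'I_n}}, steiner 3 w S & forall p, colorable 2 (derived S p) m.+1.
Proof.
move=> w3 StB [C [C_wt C_dist cardC]]; exists (code_blocks C).
  apply: (steiner_code_blocks w3 C_wt C_dist).
  by rewrite cardC (steiner_card_div w3 StB) (steiner_card StB).
move=> p; apply/colorableP; exists (code_color C p).
exact: (code_color_proper w3 C_wt C_dist).
Qed.

Lemma code_exists_alphabet_gt1 n w q : 3 <= w -> w <= n -> code_exists 3 w n q -> 1 < q.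
Proof.
move=> w3 wn [C [C_wt _ cardC]].
have : 0 < #|C| by rewrite cardC divn_gt0 ?bin_gt0 // leq_bin2l.
case/card_gt0P => x xC; apply: (alphabet_gt1 (x := x)).
by rewrite C_wt //; lia.
Qed.

Theorem mainTheorem9 (n w : nat) :
  3 <= w -> w < n ->
  (exists B : {set {set 'I_n}}, steiner 3 w B) ->
  exists S0 : {set {set 'I_n}},
    [/\ steiner 3 w S0,
        forall S : {set {set 'I_n}}, steiner 3 w S ->
          max_derived_chi S0 <= max_derived_chi S,
        code_exists 3 w n (max_derived_chi S0 + 1)
      & forall q, code_exists 3 w n q -> max_derived_chi S0 + 1 <= q].
Proof.
move=> w3 wn [B StB].
have [S0 StS0 S0_min] := arg_minnP (@max_derived_chi n) StB.
exists S0; split=> // [|q codeq]; rewrite addn1.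
  exact/(code_of_colorable_derived w3 StS0)/max_derived_chi_leP.
have := code_exists_alphabet_gt1 w3 (ltnW wn) codeq.
case: q codeq => [|[|m]] // codeq _.
have [S StS colS] := steiner_of_code w3 StB codeq.
by rewrite ltnS (leq_trans (S0_min S StS)) //; apply/max_derived_chi_leP.
Qed.
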